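(* Let $p$ be a prime, $q=p^r$, $m,n\ge1$, and $0\le l\le r-1$. Let $\mathscr{C}\subseteq\mathrm{GF}(q^m)^n$ be a scalable code. Then $\mathrm{Tr}(\mathscr{C})$ is self-orthogonal w.r.t. the Hermitian-type product $h_l(x,y)=\sum_{i=1}^n x_iy_i^{p^l}$ on $\mathrm{GF}(q)^n$ if and only if $$\sum_{i=1}^n x_iy_i^{p^lq^k}=0$$ for all $x=(x_1,\ldots,x_n),y=(y_1,\ldots,y_n)\in\mathscr{C}$ and all $0\le k\le m-1$; i.e., if and only if $\mathscr{C}$ is self-orthogonal w.r.t. each of the forms $f_{kl}(x,y)=\sum_{i=1}^n x_iy_i^{p^lq^k}$, $0\le k\le m-1$.
   Context: $\mathrm{Tr}:\mathrm{GF}(q^m)\to\mathrm{GF}(q)$, $\mathrm{Tr}(a)=\sum_{i=0}^{m-1}a^{q^i}$. A code $\mathscr{C}\subseteq\mathrm{GF}(q^m)^n$ is scalable if $x\in\mathscr{C}\Rightarrow\alpha x\in\mathscr{C}$ for all $\alpha\in\mathrm{GF}(q^m)$. $\mathrm{Tr}(\mathscr{C})=\{(\mathrm{Tr}(x_1),\ldots,\mathrm{Tr}(x_n)):x\in\mathscr{C}\}$. A code $D$ is self-orthogonal w.r.t. a form $g$ if $g(x,y)=0$ for all $x,y\in D$. *)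

From HB Require Import structures.
From mathcomp Require Import all_boot all_order all_algebra all_field.
Set Implicit Arguments. Unset Strict Implicit. Unset Printing Implicit Defensive.
Import GRing.Theory.
Local Open Scope ring_scope.

(* L plays the role of GF(q^m); GF(q) is its unique subfield of order q,
   i.e. the set of x with x^q = x. *)

Definition Tr {L : finFieldType} (q m : nat) (a : L) : L :=
  \sum_(i < m) a ^+ (q ^ i).

Definition scalable_code {L : finFieldType} {n : nat} (C : {set 'rV[L]_n}) : Prop :=
  forall (alpha : L) (x : 'rV[L]_n), x \in C -> alpha *: x \in C.

Definition TrCode {L : finFieldType} (q m : nat) {n : nat}
  (C : {set 'rV[L]_n}) : {set 'rV[L]_n} :=
  [set map_mx (Tr q m) x | x in C].

Definition powform {L : finFieldType} {n : nat} (e : nat) (x y : 'rV[L]_n) : L :=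
  \sum_(i < n) x 0 i * (y 0 i) ^+ e.

Definition self_orth {L : finFieldType} {n : nat}
  (g : 'rV[L]_n -> 'rV[L]_n -> L) (D : {set 'rV[L]_n}) : Prop :=
  forall x y, x \in D -> y \in D -> g x y = 0.

From Pilot Require Import Defs.
From HB Require Import structures.
From mathcomp Require Import all_boot all_order all_algebra all_field.
Set Implicit Arguments.
Unset Strict Implicit.
Unset Printing Implicit Defensive.
Import GRing.Theory.
Local Open Scope ring_scope.

(* The entries Tr(y_i) and their p^l-th powers lie in GF(q),
   over which Tr is linear, so for x, y in C and scalars a, b
     h_l(Tr(a x), Tr(b y)) = Tr(a S(b)),
     S(b) = sum_(k < m) f_kl(x, y) b^(p^l q^k).
   If every f_kl vanishes on C, then S(1) = 0 and a = b = 1 gives the claim.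
   Conversely, scalability makes Tr(a S(b)) = 0 for all a, hence S(b) = 0 by
   nondegeneracy of the trace; since the exponents p^l q^k are distinct and
   smaller than q^m = |L|, a polynomial vanishing on all of L must be zero,
   so every f_kl(x, y) = 0. *)

Section FiniteFieldPolynomials.
Variable L : finFieldType.

Lemma poly_finField_eq0 (P : {poly L}) :
  (size P <= #|L|)%N -> (forall b, P.[b] = 0) -> P = 0.
Proof.
move=> sizeP P0; apply/eqP/negPn/negP => /max_poly_roots roots_bound.
have /roots_bound/(_ (enum_uniq L)) : all (root P) (enum L).
  by apply/allP => b _; rewrite /root P0.
by rewrite -cardE ltnNge sizeP.
Qed.

Lemma sum_monomials_coef_eq0 (I : finType) (e : I -> nat) (c : I -> L) :
  injective e -> (forall i, e i < #|L|)%N ->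
  (forall b, \sum_i c i * b ^+ e i = 0) -> forall i, c i = 0.
Proof.
move=> inj_e e_lt vanish i.
pose P : {poly L} := \sum_j c j *: 'X^(e j).
have P0 : P = 0.
  apply: poly_finField_eq0 => [|b].
    apply: (leq_trans (size_sum _ _ _)); apply/bigmax_leqP => j _.
    by apply: (leq_trans (size_scale_leq _ _)); rewrite size_polyXn.
  rewrite -[RHS](vanish b) horner_sum; apply: eq_bigr => j _.
  by rewrite hornerZ hornerXn.
have := congr1 (fun Q : {poly L} => Q`_(e i)) P0.
rewrite coef0 coef_sum (bigD1 i) //= coefZ coefXn eqxx mulr1 big1 ?addr0 //.
by move=> j ji; rewrite coefZ coefXn (inj_eq inj_e) eq_sym (negPf ji) mulr0.
Qed.

End FiniteFieldPolynomials.

Lemma expr_sum_pchar_expn (R : comNzSemiRingType) (p k : nat) (I : Type)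
    (s : seq I) (P : pred I) (F : I -> R) :
  p \in [pchar R] ->
  (\sum_(i <- s | P i) F i) ^+ (p ^ k) = \sum_(i <- s | P i) F i ^+ (p ^ k).
Proof.
move=> pcharRp; have p_prime := pcharf_prime pcharRp.
have pk_nat : [pchar R].-nat (p ^ k)%N.
  by rewrite (eq_pnat _ (pcharf_eq pcharRp)) pnatX pnat_id ?orbT.
apply: (big_morph (fun x : R => x ^+ (p ^ k))) => [x y|].
  exact: exprDn_pchar.
by rewrite expr0n expn_eq0 eqn0Ngt prime_gt0.
Qed.

Section Trace.
Variables (L : finFieldType) (p r m : nat).
Hypotheses (pcharLp : p \in [pchar L]) (cardL : #|L| = ((p ^ r) ^ m)%N).

Local Notation q := (p ^ r)%N.
Local Notation Tr := (Tr q m).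

Lemma base_gt1 : (1 < q)%N.
Proof.
have := card_finNzRing_gt1 L; rewrite cardL.
case: q => [|[|q']] //; last by rewrite exp1n.
by case: m => [|m'] //; rewrite exp0n.
Qed.

Lemma degree_gt0 : (0 < m)%N.
Proof. by have := card_finNzRing_gt1 L; rewrite cardL; case: m. Qed.

Lemma Tr_sum (I : finType) (F : I -> L) : Tr (\sum_i F i) = \sum_i Tr (F i).
Proof.
rewrite /Tr exchange_big; apply: eq_bigr => j _.
by rewrite -expnM expr_sum_pchar_expn.
Qed.

Lemma Tr0 : Tr (0 : L) = 0.
Proof.
rewrite /Tr big1 // => j _.
by rewrite expr0n expn_eq0 (gtn_eqF (ltnW base_gt1)).
Qed.

Lemma expr_qpow_fixed (c : L) (j : nat) : c ^+ q = c -> c ^+ (q ^ j) = c.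
Proof. by move=> cq; elim: j => [|j IHj]; rewrite ?expr1 // expnSr exprM IHj. Qed.

Lemma Tr_fixed (w : L) : Tr w ^+ q = Tr w.
Proof.
rewrite /Tr expr_sum_pchar_expn //.
have := cardL; case: m degree_gt0 => // m' _ cardL'.
rewrite big_ord_recr big_ord_recl /= -exprM -expnSr -cardL' expf_card addrC.
by congr (_ + _); apply: eq_bigr => i _; rewrite -exprM -expnSr.
Qed.

Lemma expr_Tr_fixed (w : L) (e : nat) : (Tr w ^+ e) ^+ q = Tr w ^+ e.
Proof. by rewrite exprAC Tr_fixed. Qed.

Lemma Tr_mulr_fixed (a c : L) : c ^+ q = c -> Tr a * c = Tr (a * c).
Proof.
move=> cq; rewrite /Tr mulr_suml; apply: eq_bigr => j _.
by rewrite exprMn (expr_qpow_fixed _ cq).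
Qed.

Lemma expr_Tr_pchar (l : nat) (w : L) :
  Tr w ^+ (p ^ l) = \sum_(j < m) w ^+ (p ^ l * q ^ j).
Proof.
rewrite /Tr expr_sum_pchar_expn //; apply: eq_bigr => j _.
by rewrite -exprM mulnC.
Qed.

Lemma Tr_nondegenerate (z : L) : (forall a, Tr (a * z) = 0) -> z = 0.
Proof.
move=> Tr_az.
have := @sum_monomials_coef_eq0 L _ (fun j : 'I_m => q ^ j)%N
  (fun j => z ^+ (q ^ j)) _ _ _ (Ordinal degree_gt0).
rewrite /= expn0 expr1; apply.
- by move=> i j /= /(expnI base_gt1) /val_inj.
- by move=> j; rewrite cardL ltn_exp2l ?base_gt1.
- move=> a; rewrite -[RHS](Tr_az a) /Tr; apply: eq_bigr => j _.
  by rewrite exprMn mulrC.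
Qed.

Lemma powform_map_Tr (n l : nat) (a b : L) (x y : 'rV[L]_n) :
  powform (p ^ l) (map_mx Tr (a *: x)) (map_mx Tr (b *: y)) =
  Tr (a * \sum_(j < m) powform (p ^ l * q ^ j) x y * b ^+ (p ^ l * q ^ j)).
Proof.
rewrite /powform.
under eq_bigr => i _ do rewrite !mxE Tr_mulr_fixed ?expr_Tr_fixed //.
rewrite -Tr_sum mulr_sumr; congr (Defs.Tr _ _ _).
under eq_bigr => i _ do rewrite expr_Tr_pchar !mulr_sumr.
rewrite exchange_big /=; apply: eq_bigr => j _.
rewrite mulr_suml mulr_sumr; apply: eq_bigr => i _.
by rewrite exprMn -!mulrA [b ^+ _ * _]mulrC.
Qed.

Lemma sum_frobenius_twists_coef_eq0 (l : nat) (c : 'I_m -> L) : (l < r)%N ->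
  (forall b, \sum_j c j * b ^+ (p ^ l * q ^ j) = 0) -> forall j, c j = 0.
Proof.
move=> l_lt_r; have p_gt1 := prime_gt1 (pcharf_prime pcharLp).
have q_gt0 := ltnW base_gt1.
apply: sum_monomials_coef_eq0 => [i j /eqP | j].
  rewrite eqn_pmul2l ?expn_gt0 ?(ltnW p_gt1) //.
  by move=> /eqP /(expnI base_gt1) /val_inj.
rewrite cardL (@leq_trans (q ^ j.+1)) ?leq_exp2l ?base_gt1 //.
by rewrite expnS ltn_pmul2r ?ltn_exp2l // expn_gt0 q_gt0.
Qed.

End Trace.

Theorem theorem7 (p r m n l : nat) (L : finFieldType) (C : {set 'rV[L]_n}) :
  prime p -> (0 < r)%N -> (0 < m)%N -> (0 < n)%N -> (l < r)%N ->
  p \in [pchar L] -> #|L| = ((p ^ r) ^ m)%N ->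
  scalable_code C ->
  (self_orth (powform (p ^ l)) (TrCode (p ^ r) m C) <->
   (forall k : nat, (k < m)%N ->
      self_orth (powform (p ^ l * (p ^ r) ^ k)) C)).
Proof.
(* The primality of p and the positivity of r and m follow from the other
   hypotheses. *)
move=> _ _ _ _ l_lt_r pcharLp cardL scalC.
split=> [orthTr k k_lt_m x y Cx Cy | orthC _ _ /imsetP[x Cx ->] /imsetP[y Cy ->]].
- pose c (j : 'I_m) := powform (p ^ l * (p ^ r) ^ j) x y.
  apply: (sum_frobenius_twists_coef_eq0 pcharLp cardL (c := c) l_lt_r _
    (Ordinal k_lt_m)) => b.
  apply: (Tr_nondegenerate cardL) => a.
  rewrite -(powform_map_Tr pcharLp cardL).
  by apply: orthTr; apply: imset_f; apply: scalC.
- rewrite -(scale1r x) -(scale1r y) (powform_map_Tr pcharLp cardL).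
  by rewrite big1 ?mulr0 ?(Tr0 cardL) // => j _; rewrite orthC ?mul0r.
Qed.
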